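(* Let $f\ge 1$ and $k\ge 2$ be integers and let there be $n=kf+1$ validators, each maintaining a local DAG as described in the context (DAG-Rider setting). Let $p_i$ be a correct validator, let $w$ be a wave, and let $v\in DAG_i[\mathit{round}(w,1)]$ be the leader vertex of wave $w$. Suppose $p_i$ commits $v$, i.e. at least $(k-1)f+1$ vertices of $DAG_i[\mathit{round}(w,4)]$ have a path to $v$. Then for every validator $p_j$, every wave $w'>w$, and every leader vertex $v'$ of wave $w'$ with $v'\in DAG_j[\mathit{round}(w',1)]$ (the leader of wave $w'$ is the $\mathit{round}(w',1)$ vertex of an arbitrary validator, selected by a shared coin), there is a path from $v'$ to $v$.
   Context: Setting: $n=kf+1$ validators $p_1,\dots,p_n$, of which at most $f$ are Byzantine and the rest are correct (honest). All validators' local DAGs are subsets of one common set of vertices. Each vertex has a round number $r\ge 1$ and a source validator; for each validator and each round there is at most one vertex (no equivocation), so any two local DAGs that contain the vertex of a given validator for a given round contain the identical vertex, with identical edges. Every vertex of round $r\ge 2$ has edges to exactly $(k-1)f+1$ vertices of round $r-1$, all with distinct sources. Each validator $p_i$ has a local DAG $DAG_i$, a set of vertices closed under edges (if $u\in DAG_i$ then every vertex $u$ has an edge to is in $DAG_i$). $DAG_i[r]$ denotes the set of round-$r$ vertices of $DAG_i$. $\mathit{path}(u,v)$ (''a path from $u$ to $v$'') means there is a sequence of contiguous edges leading from $u$ to $v$. Rounds are grouped into waves of 4 rounds: $\mathit{round}(w,j)=4(w-1)+j$ for $j=1,2,3,4$ and waves $w\ge 1$. *)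

From mathcomp Require Import all_boot.
Set Implicit Arguments. Unset Strict Implicit. Unset Printing Implicit Defensive.

Definition round_of (w j : nat) : nat := 4 * (w - 1) + j.

Inductive dag_path (V : Type) (edge : V -> V -> bool) : V -> V -> Prop :=
| dp_edge u x : edge u x -> dag_path edge u x
| dp_step u x y : edge u x -> dag_path edge x y -> dag_path edge u y.

(* The common vertex set V, with round numbers, sources and edges, satisfies
   the DAG-Rider structural assumptions, with parameter q = (k-1)f+1. *)
Definition dag_setting (n q : nat) (V : eqType) (rnd : V -> nat)
  (src : V -> 'I_n) (edge : rel V) : Prop :=
  [/\
      forall u, 1 <= rnd u,
      forall u v, rnd u = rnd v -> src u = src v -> u = v,
      forall u x, edge u x -> rnd x + 1 = rnd u &
      forall u, 2 <= rnd u ->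
        exists s : seq V, [/\ size s = q, uniq (map src s) &
                              forall x, edge u x = (x \in s)]].

Definition local_dags_closed (n : nat) (V : eqType) (edge : rel V)
  (DAG : 'I_n -> pred V) : Prop :=
  forall i u x, DAG i u -> edge u x -> DAG i x.

Definition commits (n q : nat) (V : eqType) (rnd : V -> nat) (edge : rel V)
  (DAG : 'I_n -> pred V) (i : 'I_n) (w : nat) (v : V) : Prop :=
  exists s : seq V, [/\ uniq s, q <= size s &
    forall u, u \in s -> [/\ DAG i u, rnd u = round_of w 4 & dag_path edge u v]].

(* Every vertex of round round(w,4)+1 has edges to q = (k-1)f+1 vertices of
   round round(w,4) with distinct sources, and the commit supplies q vertices
   of that round with paths to v.  As 2q > kf+1, these two sets share a source,
   hence by non-equivocation a vertex, so every vertex of round round(w,4)+1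
   reaches v.  Every vertex of a round >= 2 has a parent, so by induction every
   vertex of any later round, in particular a later leader, reaches v. *)

From mathcomp Require Import all_boot.
From mathcomp Require Import zify.

Set Implicit Arguments.
Unset Strict Implicit.
Unset Printing Implicit Defensive.

Lemma has_common_of_size (T : finType) (s t : seq T) :
  uniq s -> uniq t -> #|T| < size s + size t -> has (mem s) t.
Proof.
move=> us ut; apply: contraTT; rewrite -leqNgt => disj.
have ust : uniq (s ++ t) by rewrite cat_uniq us ut disj.
by rewrite -size_cat -(card_uniqP ust) max_card.
Qed.

Section DagRider.

Variables (n q : nat) (V : eqType) (rnd : V -> nat) (src : V -> 'I_n).
Variable edge : rel V.
Hypothesis setting : dag_setting q rnd src edge.

Lemma edge_rnd u x : edge u x -> rnd u = (rnd x).+1.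
Proof. by case: setting => _ _ hrnd _ /hrnd; rewrite addn1. Qed.

Lemma src_inj_rnd r : {in [pred x | rnd x == r] &, injective src}.
Proof.
case: setting => _ heq _ _ x y /eqP rx /eqP ry.
by apply: heq; rewrite rx ry.
Qed.

Lemma exists_edge_to_quorum (s : seq V) (r : nat) (u : V) :
  0 < r -> uniq s -> {in s, forall x, rnd x = r} -> n < q + size s ->
  rnd u = r.+1 -> exists2 x, x \in s & edge u x.
Proof.
move=> r_gt0 us rs qs ru.
have [_ _ _ /(_ u)] := setting; rewrite ru ltnS => /(_ r_gt0) [t [szt ut ht]].
have rt x : x \in t -> rnd x = r by rewrite -ht => /edge_rnd; rewrite ru => -[].
have src_inj_s : {in s &, injective src}.
  by move=> x y /rs rx /rs ry; apply: src_inj_rnd; rewrite inE ?rx ?ry.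
have uniq_src_s : uniq (map src s) by rewrite map_inj_in_uniq.
have := has_common_of_size ut uniq_src_s; rewrite card_ord !size_map szt => /(_ qs).
case/hasP=> _ /mapP[x xs ->] /mapP[y yt eq_src].
exists x; rewrite // ht.
suff -> : x = y by [].
by apply: (@src_inj_rnd r); rewrite ?inE ?(rs x xs) ?(rt y yt).
Qed.

Lemma dag_path_from_round (v : V) (r : nat) :
  0 < q -> (forall u, rnd u = r.+1 -> dag_path edge u v) ->
  forall u, r < rnd u -> dag_path edge u v.
Proof.
move=> q_gt0 base.
suff path_at m u : rnd u = r.+1 + m -> dag_path edge u v.
  by move=> u ru; apply: (path_at (rnd u - r.+1)); rewrite subnKC.
elim: m u => [|m IH] u ru; first by apply: base; rewrite ru addn0.
have [_ _ _ /(_ u)] := setting; rewrite ru addnS => /(_ isT) [t [szt _ ht]].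
case: t szt ht => [|x t] szt ht; first by rewrite -szt in q_gt0.
have ux : edge u x by rewrite ht mem_head.
apply: (dp_step ux (IH x _)).
by have := edge_rnd ux; rewrite ru addnS => -[].
Qed.

End DagRider.

Theorem lemma1 (f k : nat) (hf : 1 <= f) (hk : 2 <= k)
  (V : eqType) (rnd : V -> nat) (src : V -> 'I_(k * f + 1)) (edge : rel V)
  (DAG : 'I_(k * f + 1) -> pred V) (correct : pred 'I_(k * f + 1))
  (leader : nat -> 'I_(k * f + 1)) :
  dag_setting ((k - 1) * f + 1) rnd src edge ->
  local_dags_closed edge DAG ->
  #|[pred i | ~~ correct i]| <= f ->
  forall (i : 'I_(k * f + 1)) (w : nat) (v : V),
    correct i -> 1 <= w ->
    DAG i v -> rnd v = round_of w 1 -> src v = leader w ->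
    commits ((k - 1) * f + 1) rnd edge DAG i w v ->
    forall (j : 'I_(k * f + 1)) (w' : nat) (v' : V),
      w < w' ->
      DAG j v' -> rnd v' = round_of w' 1 -> src v' = leader w' ->
      dag_path edge v' v.
Proof.
move=> setting _ _ i w v _ w_gt0 _ _ _ [s [us qs hs]] _ w' v' lt_ww' _ rv' _.
have quorums_meet : k * f + 1 < (k - 1) * f + 1 + size s by nia.
have r_gt0 : 0 < round_of w 4 by rewrite /round_of addn4.
have rs : {in s, forall x, rnd x = round_of w 4} by move=> x /hs[].
apply: (dag_path_from_round setting (r := round_of w 4)) => [|u ru|].
- by rewrite addn1.
- have [x xs ux] := exists_edge_to_quorum setting r_gt0 us rs quorums_meet ru.
  by have [_ _ xv] := hs x xs; apply: dp_step ux xv.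
- by rewrite rv' /round_of; lia.
Qed.
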